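(* Let $K$ be a field, $S=K[[x_1,\dots,x_n]]$ with maximal ideal $\mathfrak{m}$, let $E$ be the $S$-module described in the context, and fix a term order $\prec$ on $E$. Let $N\subset E$ be an $S$-submodule. If $0\neq\eta\in N:_E\mathfrak{m}$, then $\mathrm{LT}_\prec(\eta)\in \langle \mathrm{LT}_\prec(N)\rangle:_E\mathfrak{m}$; that is, for every $i=1,\dots,n$, either $x_i\,\mathrm{LT}_\prec(\eta)=0$ or $x_i\,\mathrm{LT}_\prec(\eta)\in\mathrm{LT}_\prec(N)$.
   Context: $E=K[x_1^{-1},\dots,x_n^{-1}]\cdot\frac{1}{x_1\cdots x_n}$ is the $K$-vector space with basis the ''terms'' $\frac{1}{x^{\alpha+1}}=\frac{1}{x_1^{\alpha_1+1}\cdots x_n^{\alpha_n+1}}$, $\alpha\in\mathbb{Z}_{\ge0}^n$, with $S$-module structure given by $x^{\gamma}\cdot\frac{1}{x^{\beta+1}}=\frac{1}{x^{\beta-\gamma+1}}$ if $\beta-\gamma\in\mathbb{Z}^n_{\ge0}$ and $0$ otherwise, extended bilinearly (this is the injective hull of $K$ as an $S$-module). A term order on $E$ is a total order $\prec$ on the set of terms such that (1) $\frac{1}{x^{1}}\preceq\frac{1}{x^{\alpha+1}}$ for all $\alpha$ (where $x^1=x_1\cdots x_n$), and (2) $\frac{1}{x^{\alpha+1}}\prec\frac{1}{x^{\beta+1}}$ implies $\frac{1}{x^{\alpha+\gamma+1}}\prec\frac{1}{x^{\beta+\gamma+1}}$ for all $\alpha,\beta,\gamma\in\mathbb{Z}^n_{\ge0}$.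 For $0\ne\eta\in E$, $\mathrm{LT}_\prec(\eta)$ is the $\prec$-largest term occurring in $\eta$ with nonzero coefficient. For a subset $N\subset E$, $\mathrm{LT}_\prec(N)=\{\mathrm{LT}_\prec(\eta)\mid 0\ne\eta\in N\}$, and $\langle\mathrm{LT}_\prec(N)\rangle$ is the $S$-submodule it generates. For an $S$-submodule $N\subset E$, $N:_E\mathfrak{m}=\{\eta\in E\mid \mathfrak{m}\eta\subset N\}$. *)

From HB Require Import structures.
From mathcomp Require Import all_boot all_order all_algebra.
From mathcomp Require Import mpoly.
Set Implicit Arguments. Unset Strict Implicit. Unset Printing Implicit Defensive.
Import GRing.Theory.
Local Open Scope ring_scope.

Notation mon n := 'X_{1..n}.

(* E = K[x^-1]/(x1...xn): the K-vector space with basis the terms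
   1/x^(alpha+1).  We encode it by {mpoly K[n]}: the term 1/x^(alpha+1)
   is represented by the monomial 'X_[alpha]; an element of E is a finite
   K-linear combination of terms.  (Only the K-vector-space structure of
   {mpoly K[n]} is used; its multiplication plays no role.) *)
Definition E (n : nat) (K : fieldType) := {mpoly K[n]}.
Definition term (n : nat) (K : fieldType) (a : mon n) : E n K := 'X_[a].

(* S = K[[x1,...,xn]]: a formal power series is its coefficient function. *)
Definition series (n : nat) (K : fieldType) := mon n -> K.

Definition xmon (n : nat) (K : fieldType) (g : mon n) : series n K :=
  fun h => (h == g)%:R.

(* S-module structure on E:  x^g . 1/x^(b+1) = 1/x^(b-g+1) if g <= b, 0
   otherwise, extended bilinearly.  For eta with finite support, the series
   f acts through the (finitely many) monomials g <= b of the support terms;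
   those all have degree <= mdeg b, so they are enumerated by 'X_{1..n < _}. *)
Definition sact (n : nat) (K : fieldType) (f : series n K) (eta : E n K)
  : E n K :=
  \sum_(b <- msupp eta)
     eta@_b *: \sum_(g : 'X_{1..n < (mdeg b).+1} | (bmnm g <= b)%MM)
                 f (bmnm g) *: term K (b - bmnm g)%MM.

Definition in_maxideal (n : nat) (K : fieldType) (f : series n K) : Prop :=
  f 0%MM = 0.

Definition is_submodule (n : nat) (K : fieldType) (N : E n K -> Prop) : Prop :=
  [/\ N 0,
      (forall u v, N u -> N v -> N (u + v)) &
      (forall (f : series n K) u, N u -> N (sact f u))].

Definition colon (n : nat) (K : fieldType) (N : E n K -> Prop) (eta : E n K)
  : Prop :=
  forall f : series n K, in_maxideal f -> N (sact f eta).

Definition gen (n : nat) (K : fieldType) (A : E n K -> Prop) (eta : E n K)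
  : Prop :=
  forall N : E n K -> Prop, is_submodule N -> (forall u, A u -> N u) -> N eta.

(* A term order on E, given as the strict relation lt on exponents:
   lt a b  means  1/x^(a+1) < 1/x^(b+1). *)
Definition is_term_order (n : nat) (lt : rel (mon n)) : Prop :=
  [/\ irreflexive lt,
      transitive lt,
      (forall a b, a != b -> lt a b || lt b a),
      (forall a, (a == 0%MM) || lt 0%MM a) &
      (forall a b g, lt a b -> lt (a + g)%MM (b + g)%MM)].

(* Exponent of the lt-largest term occurring in eta (meaningful for eta != 0;
   0 is the minimum of any term order, so it is a correct starting value). *)
Definition LTexp (n : nat) (K : fieldType) (lt : rel (mon n)) (eta : E n K)
  : mon n :=
  foldr (fun a b => if lt b a then a else b) 0%MM (msupp eta).

Definition LT (n : nat) (K : fieldType) (lt : rel (mon n)) (eta : E n K)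
  : E n K := term K (LTexp lt eta).

Definition LTset (n : nat) (K : fieldType) (lt : rel (mon n))
  (N : E n K -> Prop) (u : E n K) : Prop :=
  exists eta, [/\ N eta, eta != 0 & u = LT lt eta].

From mathcomp Require Import all_boot all_order all_algebra.
From mathcomp Require Import mpoly.
Set Implicit Arguments.
Unset Strict Implicit.
Unset Printing Implicit Defensive.
Import GRing.Theory.
Local Open Scope ring_scope.

(* Let 1/x^(a+1) be the leading term of eta.  For 0 != g <= a the monomial
   x^g lies in m, so x^g eta lies in N; since a term order is compatible with
   shifting, its leading term is x^g 1/x^(a+1) = 1/x^(a-g+1).  Thus every
   nonzero shift of LT(eta) lies in LT(N), and for f in m the element
   f LT(eta) is a linear combination of such shifts, hence lies in <LT(N)>. *)

Section TermOrder.
Variables (n : nat) (K : fieldType) (lt : rel 'X_{1..n}).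
Hypothesis lt_order : is_term_order lt.

Local Notation le a b := ((a == b) || lt a b).

Lemma lt_irr a : lt a a = false.
Proof. by case: lt_order => irr _ _ _ _; exact: irr. Qed.

Lemma lt_trans {a b c} : lt a b -> lt b c -> lt a c.
Proof. by case: lt_order => _ tr _ _ _; exact: tr. Qed.

Lemma lt_total a b : a != b -> lt a b || lt b a.
Proof. by case: lt_order => _ _ tot _ _; exact: tot. Qed.

Lemma lt_x0 a : lt a 0%MM = false.
Proof.
apply/negbTE/negP => lt_a0; case: lt_order => _ _ _ min0 _.
have /orP[/eqP a0 | lt_0a] := min0 a; first by rewrite a0 lt_irr in lt_a0.
by have := lt_trans lt_a0 lt_0a; rewrite lt_irr.
Qed.

Lemma lt_subm2r g a b :
  (g <= a)%MM -> (g <= b)%MM -> lt a b -> lt (a - g)%MM (b - g)%MM.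
Proof.
move=> ga gb lt_ab; case: lt_order => _ _ _ _ ltD.
have [eq_ab | /lt_total/orP[//|lt_ba]] := eqVneq (a - g)%MM (b - g)%MM.
  by move: lt_ab; rewrite -(submK ga) -(submK gb) eq_ab lt_irr.
have := ltD _ _ g lt_ba; rewrite !submK // => /(lt_trans lt_ab).
by rewrite lt_irr.
Qed.

Lemma LTexp_mem (eta : E n K) : LTexp lt eta \in 0%MM :: msupp eta.
Proof.
rewrite /LTexp; elim: (msupp eta) => [|x s IH] /=; first exact: mem_head.
case: ifP => _; first by rewrite !inE eqxx orbT.
by move: IH; rewrite !inE => /orP[->|->]; rewrite ?orbT.
Qed.

Lemma le_LTexp (eta : E n K) :
  {in msupp eta, forall b, le b (LTexp lt eta)}.
Proof.
rewrite /LTexp; elim: (msupp eta) => [//|x s IH] b /=.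
set r := foldr _ _ s in IH *.
case: ifP => lt_rx; rewrite inE => /orP[/eqP-> | bs].
- by rewrite eqxx.
- case/orP: (IH b bs) => [/eqP-> | /lt_trans/(_ lt_rx)->].
    by rewrite lt_rx orbT.
  by rewrite orbT.
- by have [// | /lt_total] := eqVneq x r; rewrite lt_rx orbF => ->.
- exact: IH.
Qed.

Lemma LTexp_msupp (eta : E n K) : eta != 0 -> LTexp lt eta \in msupp eta.
Proof.
rewrite -msupp_eq0; case def_s: (msupp eta) => [//|c s] _; rewrite -def_s.
have cs : c \in msupp eta by rewrite def_s mem_head.
move: (LTexp_mem eta); rewrite inE => /orP[/eqP LT0 | //].
by move: (le_LTexp cs); rewrite LT0 lt_x0 orbF => /eqP <-.
Qed.

Lemma LTexp_unique (eta : E n K) r :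
  r \in msupp eta -> {in msupp eta, forall b, le b r} -> LTexp lt eta = r.
Proof.
move=> r_supp le_r.
have eta_nz : eta != 0 by rewrite -msupp_eq0; case: msupp r_supp.
have [// | ne] := eqVneq (LTexp lt eta) r.
have := le_LTexp r_supp; rewrite eq_sym (negbTE ne) /= => lt_r.
have := le_r _ (LTexp_msupp eta_nz); rewrite (negbTE ne) /= => /(lt_trans lt_r).
by rewrite lt_irr.
Qed.

End TermOrder.

Section Action.
Variables (n : nat) (K : fieldType).
Implicit Types (eta u : E n K) (f : series n K) (a b g : 'X_{1..n}).

Lemma sactZl c f eta : sact (fun h => c * f h) eta = c *: sact f eta.
Proof.
rewrite /sact scaler_sumr; apply: eq_bigr => b _.
by rewrite !scaler_sumr; apply: eq_bigr => g _; rewrite !scalerA mulrCA mulrA.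
Qed.

Lemma sact_term f a :
  sact f (term K a) =
  \sum_(g : 'X_{1..n < (mdeg a).+1} | (bmnm g <= a)%MM) f g *: term K (a - g).
Proof. by rewrite /sact /term msuppX big_seq1 mcoeffX eqxx scale1r. Qed.

Lemma sact_xmon g eta :
  sact (xmon K g) eta =
  \sum_(b <- msupp eta | (g <= b)%MM) eta@_b *: term K (b - g).
Proof.
rewrite /sact [RHS]big_mkcond; apply: eq_bigr => b _; case: ifP => gb.
  have small_g : (mdeg g < (mdeg b).+1)%N.
    by rewrite ltnS -(submK gb) mdegD leq_addl.
  rewrite (bigD1 (BMultinom small_g)) //= big1 => [|h /andP[_ ne]].
    by rewrite /xmon eqxx scale1r addr0.
  by move: ne; rewrite bmeqP /= => /negbTE ne; rewrite /xmon ne scale0r.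
rewrite big1 ?scaler0 // => h hb.
by rewrite /xmon; case: eqP hb => [->|_]; rewrite ?gb ?scale0r.
Qed.

Lemma sact_xmon0 eta : sact (xmon K 0) eta = eta.
Proof.
rewrite sact_xmon [RHS]mpolyE.
apply: eq_big => [b | b _]; last by rewrite subm0.
by apply/mnm_lepP => i; rewrite mnm0E.
Qed.

Lemma sact_xmon_term g a :
  sact (xmon K g) (term K a) = if (g <= a)%MM then term K (a - g) else 0.
Proof.
rewrite sact_xmon msuppX big_cons big_nil mcoeffX eqxx scale1r.
by case: ifP; rewrite ?addr0.
Qed.

Lemma mcoeff_sact_xmon g eta c :
  (sact (xmon K g) eta)@_c =
  \sum_(b <- msupp eta | (g <= b)%MM) eta@_b * ((b - g)%MM == c)%:R.
Proof.
rewrite sact_xmon raddf_sum; apply: eq_bigr => b _.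
by rewrite /= mcoeffZ mcoeffX.
Qed.

End Action.

Section Submodules.
Variables (n : nat) (K : fieldType).
Implicit Types (M : E n K -> Prop) (A : E n K -> Prop).

Lemma submoduleZ M c u : is_submodule M -> M u -> M (c *: u).
Proof.
by case=> _ _ M_sact Mu; rewrite -(sact_xmon0 u) -sactZl; exact: M_sact.
Qed.

Lemma submodule_sum M (I : Type) (r : seq I) (P : pred I) (F : I -> E n K) :
  is_submodule M -> (forall i, P i -> M (F i)) -> M (\sum_(i <- r | P i) F i).
Proof. by case=> M0 MD _; exact: big_ind. Qed.

Lemma gen_submodule A : is_submodule (gen A).
Proof.
split=> [M [M0 _ _] _ // | u v Au Av M MM AM | f u Au M MM AM].
  by case: (MM) => _ MD _; apply: MD; [exact: Au | exact: Av].
by case: (MM) => _ _ M_sact; apply: M_sact; exact: Au.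
Qed.

Lemma gen_sub A u : A u -> gen A u.
Proof. by move=> Au M _; apply. Qed.

Lemma colon_term M a :
  is_submodule M ->
  (forall g, g != 0%MM -> (g <= a)%MM -> M (term K (a - g))) ->
  colon M (term K a).
Proof.
move=> MM M_shift f f0; rewrite sact_term; apply: submodule_sum => // g ga.
have [-> | g_nz] := eqVneq (bmnm g) 0%MM; first by rewrite f0 scale0r; case: MM.
by apply: submoduleZ => //; exact: M_shift.
Qed.

End Submodules.

Section LeadingTerm.
Variables (n : nat) (K : fieldType) (lt : rel 'X_{1..n}).
Hypothesis lt_order : is_term_order lt.
Variables (eta : E n K) (g : 'X_{1..n}).
Hypotheses (eta_nz : eta != 0) (g_LT : (g <= LTexp lt eta)%MM).

Local Notation a := (LTexp lt eta).
Local Notation z := (sact (xmon K g) eta).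

Lemma mcoeff_sact_xmon_LTexp : z@_(a - g) = eta@_a.
Proof.
rewrite mcoeff_sact_xmon big_mkcond (bigD1_seq a) ?msupp_uniq ?LTexp_msupp //=.
rewrite g_LT eqxx mulr1 big1 ?addr0 // => b ne_ba; case: ifP => // gb.
by rewrite -(inj_eq (@addIm _ g)) !submK // (negbTE ne_ba) mulr0.
Qed.

Lemma le_msupp_sact_xmon c :
  c \in msupp z -> (c == a - g)%MM || lt c (a - g)%MM.
Proof.
rewrite mcoeff_msupp mcoeff_sact_xmon; apply: contraR => not_le.
rewrite big1_seq // => b /andP[gb b_supp].
case: eqP => [bgc | _]; last exact: mulr0.
move: not_le; rewrite -bgc.
case/orP: (le_LTexp lt_order b_supp) => [/eqP-> | lt_ba]; first by rewrite eqxx.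
by rewrite (lt_subm2r lt_order gb g_LT lt_ba) orbT.
Qed.

Lemma LTexp_sact_xmon : z != 0 /\ LTexp lt z = (a - g)%MM.
Proof.
have shifted_supp : (a - g)%MM \in msupp z.
  by rewrite mcoeff_msupp mcoeff_sact_xmon_LTexp -mcoeff_msupp LTexp_msupp.
split; first by rewrite -msupp_eq0; case: msupp shifted_supp.
by apply: (LTexp_unique lt_order) => // c; exact: le_msupp_sact_xmon.
Qed.

Lemma LTset_term_subLTexp (N : E n K -> Prop) :
  colon N eta -> g != 0%MM -> LTset lt N (term K (a - g)).
Proof.
move=> eta_colon g_nz; have [z_nz LT_z] := LTexp_sact_xmon.
exists z; split=> //; last by rewrite /LT LT_z.
by apply: eta_colon; rewrite /in_maxideal /xmon eq_sym (negbTE g_nz).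
Qed.

End LeadingTerm.

Theorem lemma3p5 (n : nat) (K : fieldType) (lt : rel 'X_{1..n})
  (N : E n K -> Prop) (eta : E n K) :
  is_term_order lt ->
  is_submodule N ->
  eta != 0 ->
  colon N eta ->
  colon (gen (LTset lt N)) (LT lt eta) /\
  (forall i : 'I_n,
     sact (xmon K (mnm1 i)) (LT lt eta) = 0 \/
     LTset lt N (sact (xmon K (mnm1 i)) (LT lt eta))).
Proof.
(* [N] need not be a submodule: [colon N eta] alone puts x^g eta in [N]. *)
move=> lt_order _ eta_nz eta_colon.
have LT_shift (g : 'X_{1..n}) : g != 0%MM -> (g <= LTexp lt eta)%MM ->
    LTset lt N (term K (LTexp lt eta - g)).
  move=> g_nz g_LT.
  exact: (LTset_term_subLTexp lt_order eta_nz g_LT eta_colon g_nz).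
split.
  apply: colon_term (gen_submodule _) _ => g g_nz g_LT.
  by apply: gen_sub; exact: LT_shift.
move=> i; rewrite /LT sact_xmon_term; case: ifP => i_LT; last by left.
by right; apply: LT_shift; rewrite ?mnm1_eq0.
Qed.
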